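(* For every instance of continuous BGT, every schedule $S$, and every nonempty subset $V'\subseteq V$ of the points, $\mathrm{MH}(S)\ge h_{\min}(V')\cdot \mathrm{MST}(V')$.
   Context: Continuous BGT: bamboos $b_1,\dots,b_n$ located at points $V=\{v_1,\dots,v_n\}$, growth rates $h_1\ge\dots\ge h_n>0$, initial heights $0$; symmetric travel times $t_{i,j}>0$ ($i\ne j$) satisfying the triangle inequality. A robot starts at $v_1$ at time $0$, moves between points taking time $t_{i,j}$ from $v_i$ to $v_j$, and cuts the bamboo at each point it is at, instantaneously, to height $0$. Height of $b_i$ at time $t$ = $h_i$ times the time since its last cut (or since $0$). $\mathrm{MH}(S)$ = supremum of heights over all times. For $V'\subseteq V$, $h_{\min}(V')$ is the minimum growth rate of a bamboo located in $V'$, and $\mathrm{MST}(V')$ is the minimum total weight of a spanning tree on $V'$ with edge weights $t_{i,j}$ ($0$ if $|V'|=1$). *)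

From HB Require Import structures.
From mathcomp Require Import all_boot all_order all_algebra.
Set Implicit Arguments. Unset Strict Implicit. Unset Printing Implicit Defensive.
Import Order.TTheory GRing.Theory Num.Theory.
Local Open Scope ring_scope.

Section BGT.
Variable R : realFieldType.
Variable n : nat.
(* points v_1, ..., v_{n+1} are the elements of 'I_n.+1; v_1 = ord0 *)
Notation P := 'I_n.+1.

Definition dist (t : P -> P -> R) (i j : P) : R := if i == j then 0 else t i j.

(* a schedule: the robot is at point s k at time T k (where it cuts);
   it starts at v_1 at time 0, consecutive visits respect travel times
   (waiting is allowed), and the schedule runs forever. *)
Definition schedule (t : P -> P -> R) (s : nat -> P) (T : nat -> R) : Prop :=
  [/\ s 0%N = ord0, T 0%N = 0,
      (forall k, T k + dist t (s k) (s k.+1) <= T k.+1)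
    & (forall x : R, exists k, x <= T k)].

Definition last_cut (s : nat -> P) (T : nat -> R) (i : P) (tm L : R) : Prop :=
  [/\ L = 0 \/ (exists k, s k = i /\ T k = L), L <= tm
    & forall k, s k = i -> T k <= tm -> T k <= L].

(* height of bamboo i at time tm equals h i * (tm - L), L the last cut time *)
Definition MH_le (h : P -> R) (s : nat -> P) (T : nat -> R) (M : R) : Prop :=
  forall (i : P) (tm L : R), 0 <= tm -> last_cut s T i tm L -> h i * (tm - L) <= M.

(* edges of a graph on a subset V' : ordered pairs (i, j) with i < j *)
Definition adj (E : {set P * P}) : rel P :=
  fun x y => ((x, y) \in E) || ((y, x) \in E).

Definition spanning_tree (V' : {set P}) (E : {set P * P}) : bool :=
  [&& E \subset [set e : P * P | [&& (e.1 < e.2)%N, e.1 \in V' & e.2 \in V']],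
      #|E| == #|V'|.-1
    & [forall x in V', forall y in V', connect (adj E) x y]].

Definition weight (t : P -> P -> R) (E : {set P * P}) : R :=
  \sum_(e in E) t e.1 e.2.

Definition MST (t : P -> P -> R) (V' : {set P}) : R :=
  let E0 := odflt set0 [pick E | spanning_tree V' E] in
  \big[Order.min/weight t E0]_(E | spanning_tree V' E) weight t E.

Definition hmin (h : P -> R) (V' : {set P}) : R :=
  let i0 := odflt ord0 [pick i in V'] in
  \big[Order.min/h i0]_(i in V') h i.

End BGT.

(* Fix a time [tm] so late that [hmin V' * tm > M].  A bamboo of V' grows at
   rate at least [hmin V'], so each point of V' must be cut at some time in
   the window [tm - M / hmin V', tm].  Follow the robot from the first to the
   last of these cuts: attaching every newly reached point of V' to the
   previously added one yields a spanning tree of V', and by the triangle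
   inequality its weight is at most the length of the window. *)
From HB Require Import structures.
From mathcomp Require Import all_boot all_order all_algebra.
From mathcomp Require Import lra.
Set Implicit Arguments. Unset Strict Implicit. Unset Printing Implicit Defensive.
Import Order.TTheory GRing.Theory Num.Theory.
Local Open Scope ring_scope.

Section Trees.
Variable R : realFieldType.
Variable n : nat.
Notation P := 'I_n.+1.
Variable t : P -> P -> R.
Hypothesis t_pos : forall i j, i != j -> 0 < t i j.
Hypothesis t_sym : forall i j, t i j = t j i.
Hypothesis t_tri : forall i j k, i != j -> j != k -> i != k -> t i k <= t i j + t j k.

Lemma dist_ge0 i j : 0 <= dist t i j.
Proof. by rewrite /dist; case: eqVneq => // /t_pos/ltW. Qed.

Lemma dist_tri i j k : dist t i k <= dist t i j + dist t j k.
Proof.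
have [->|nij] := eqVneq i j; first by rewrite {2}/dist eqxx add0r.
have [->|njk] := eqVneq j k; first by rewrite {3}/dist eqxx addr0.
have [->|nik] := eqVneq i k; first by rewrite /dist eqxx addr_ge0 // ?dist_ge0.
by rewrite /dist (negbTE nij) (negbTE njk) (negbTE nik) t_tri.
Qed.

Definition edge (p q : P) : P * P := if (p < q)%N then (p, q) else (q, p).

Lemma spanning_tree_set1 (x : P) : spanning_tree [set x] set0.
Proof.
apply/and3P; split; first exact: sub0set.
  by rewrite cards0 cards1.
by apply/forall_inP => y /set1P ->; apply/forall_inP => z /set1P ->; exact: connect0.
Qed.

Lemma spanning_tree_edge (U : {set P}) E e :
  spanning_tree U E -> e \in E -> (e.1 \in U) && (e.2 \in U).
Proof. by case/and3P=> /subsetP sub _ _ /sub; rewrite inE => /and3P[_ -> ->]. Qed.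

Lemma edge_notin_tree (U : {set P}) E p q :
  spanning_tree U E -> q \notin U -> edge p q \notin E.
Proof.
move=> tree qU; apply: contra qU => /(spanning_tree_edge tree).
by rewrite /edge; case: ifP => _ /andP[].
Qed.

Lemma weightU1 (U : {set P}) E p q : spanning_tree U E -> q \notin U ->
  weight t (edge p q |: E) = weight t E + t p q.
Proof.
move=> tree qU; rewrite /weight big_setU1 ?(edge_notin_tree _ tree) //= addrC.
by rewrite /edge; case: ifP => //= _; rewrite t_sym.
Qed.

Lemma spanning_treeU1 (U : {set P}) E p q : spanning_tree U E -> p \in U -> q \notin U ->
  spanning_tree (q |: U) (edge p q |: E).
Proof.
move=> tree pU qU; have /and3P[sub /eqP cardE conn] := tree.
have npq : p != q by apply: contraNneq qU => <-.
apply/and3P; split.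
- apply/subsetP => e; rewrite !inE => /orP[/eqP ->|eE].
    rewrite /edge; case: ifP => /= lt; rewrite eqxx pU ?orbT ?andbT //.
    by rewrite ltn_neqAle leqNgt lt andbT eq_sym.
  move: (subsetP sub e eE); rewrite inE => /and3P[-> e1U e2U].
  by rewrite e1U e2U !orbT.
- have U_gt0 : (0 < #|U|)%N by apply/card_gt0P; exists p.
  rewrite [#|_ |: E|]cardsU1 (edge_notin_tree p tree qU) cardsU1 qU cardE.
  by rewrite add1n prednK.
- set G := adj (edge p q |: E).
  have connE x y : connect (adj E) x y -> connect G x y.
    apply: connect_sub => u v uv; apply: connect1.
    by case/orP: uv => uv; rewrite /G /adj !inE uv ?orbT.
  have to_p x : x \in q |: U -> connect G x p.
    rewrite !inE => /orP[/eqP ->|xU].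
      by apply: connect1; rewrite /G /adj !inE /edge; case: ifP; rewrite eqxx ?orbT.
    by apply/connE; move: conn => /forall_inP/(_ x xU)/forall_inP/(_ p pU).
  have Gsym : connect_sym G by apply: sym_connect_sym => x y; rewrite /G /adj orbC.
  apply/forall_inP => x xU; apply/forall_inP => y yU.
  by apply: connect_trans (to_p x xU) _; rewrite Gsym to_p.
Qed.

Lemma MST_le_weight (U : {set P}) E : spanning_tree U E -> MST t U <= weight t E.
Proof. by move=> tree; rewrite /MST (bigD1 E) //= ge_min lexx. Qed.

End Trees.

Lemma hmin_le (R : realFieldType) n (h : 'I_n.+1 -> R) (U : {set 'I_n.+1}) i :
  i \in U -> hmin h U <= h i.
Proof. by move=> iU; rewrite /hmin (bigD1 i) //= ge_min lexx. Qed.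

Lemma hmin_gt0 (R : realFieldType) n (h : 'I_n.+1 -> R) (U : {set 'I_n.+1}) :
  (forall i, 0 < h i) -> 0 < hmin h U.
Proof.
by move=> h_pos; apply: (big_ind (fun x => 0 < x)) => // x y; rewrite lt_min => -> ->.
Qed.

Section Walk.
Variable R : realFieldType.
Variable n : nat.
Notation P := 'I_n.+1.
Variable t : P -> P -> R.
Hypothesis t_pos : forall i j, i != j -> 0 < t i j.
Hypothesis t_sym : forall i j, t i j = t j i.
Hypothesis t_tri : forall i j k, i != j -> j != k -> i != k -> t i k <= t i j + t j k.
Variables (s : nat -> P) (T : nat -> R).
Hypothesis T_step : forall k, T k + dist t (s k) (s k.+1) <= T k.+1.
Variables (V' : {set P}) (a : nat).
Hypothesis saV : s a \in V'.

Definition visited (m : nat) : {set P} :=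
  [set x in V' | [exists k : 'I_m.+1, s (a + k)%N == x]].

Lemma visited0 : visited 0 = [set s a].
Proof.
apply/setP => x; rewrite !inE; apply/andP/eqP.
  by case=> _ /existsP[k]; rewrite (ord1 k) addn0 => /eqP.
by move=> ->; split => //; apply/existsP; exists ord0; rewrite addn0.
Qed.

Lemma visitedS m :
  visited m.+1 = if s (a + m.+1)%N \in V' then s (a + m.+1)%N |: visited m else visited m.
Proof.
set q := s (a + m.+1)%N.
have visitS x : [exists k : 'I_m.+2, s (a + k)%N == x] =
    (q == x) || [exists k : 'I_m.+1, s (a + k)%N == x].
  apply/existsP/orP => [[k kx]|[qx|/existsP[k kx]]]; last 2 first.
  - by exists ord_max.
  - by exists (widen_ord (leqnSn _) k).
  have [km|km] := ltnP k m.+1; first by right; apply/existsP; exists (Ordinal km).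
  have k_max : (k : nat) = m.+1 by apply/eqP; rewrite eqn_leq km -ltnS ltn_ord.
  by left; rewrite /q -k_max.
apply/setP => x; rewrite !inE visitS andb_orr.
case: ifP => qV; rewrite !inE; first by case: eqVneq => [<-|]; rewrite ?qV ?andbF.
by case: eqVneq => [<-|]; rewrite ?qV ?andbF.
Qed.

Lemma visited_eq m :
  (forall x, x \in V' -> exists2 k, (a <= k <= a + m)%N & s k = x) -> visited m = V'.
Proof.
move=> hit; apply/setP => x; rewrite inE andb_idr // => /hit[k /andP[ak km] <-].
have k_lt : (k - a < m.+1)%N by rewrite ltnS leq_subLR.
by apply/existsP; exists (Ordinal k_lt); rewrite /= subnKC.
Qed.

(* Invariant: [p] is the point added last.  The walk from [p] to the current
   position already pays for the edge that will attach the next new point. *)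
Lemma walk_spanning_tree m : exists E p,
  [/\ spanning_tree (visited m) E, p \in visited m &
      weight t E + dist t p (s (a + m)%N) <= T (a + m)%N - T a].
Proof.
elim: m => [|m [E [p [tree pU Hw]]]].
  exists set0, (s a); rewrite visited0 addn0 spanning_tree_set1 set11.
  by split => //; rewrite /weight big_set0 /dist eqxx add0r subrr.
set q := s (a + m.+1)%N.
have Hpq : weight t E + dist t p q <= T (a + m.+1)%N - T a.
  have := T_step (a + m)%N; have := dist_tri t_pos t_tri p (s (a + m)%N) q.
  rewrite /q addnS; lra.
rewrite visitedS -/q.
have [qV|qV] := boolP (q \in V'); last by exists E, p.
have [qU|qU] := boolP (q \in visited m).
  by exists E, p; rewrite (setUidPr _) ?sub1set.
have npq : p != q by apply: contraNneq qU => <-.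
exists (edge p q |: E), q; split; first exact: spanning_treeU1.
  exact: setU11.
by move: Hpq; rewrite (weightU1 t_sym _ tree) // /dist eqxx (negbTE npq) addr0.
Qed.

End Walk.

Section Schedule.
Variable R : realFieldType.
Variable n : nat.
Notation P := 'I_n.+1.
Variable t : P -> P -> R.
Hypothesis t_pos : forall i j, i != j -> 0 < t i j.
Variables (s : nat -> P) (T : nat -> R).
Hypothesis S_sched : schedule t s T.

Lemma schedule_step k : T k + dist t (s k) (s k.+1) <= T k.+1.
Proof. by case: S_sched. Qed.

Lemma schedule_mono k k' : (k <= k')%N -> T k <= T k'.
Proof.
move=> /subnKC <-; elim: (k' - k)%N => [|d IH]; first by rewrite addn0.
rewrite addnS; apply: le_trans IH (le_trans _ (schedule_step _)).
by rewrite lerDl dist_ge0.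
Qed.

Lemma schedule_unbounded tm : exists K, forall k, (K <= k)%N -> tm < T k.
Proof.
case: S_sched => _ _ _ /(_ (tm + 1))[K HK]; exists K => k Kk.
by apply: lt_le_trans (schedule_mono Kk); apply: lt_le_trans HK; rewrite ltrDl.
Qed.

Lemma last_cut_exists i tm : 0 <= tm -> exists L, last_cut s T i tm L.
Proof.
move=> tm_ge0; have [K HK] := schedule_unbounded tm.
have early k : T k <= tm -> (k < K)%N.
  by rewrite ltnNge; apply: contraTN => /HK; rewrite -ltNge.
pose cut (k : 'I_K) := (s k == i) && (T k <= tm).
have [k0 cut_k0|no_cut] := pickP cut; last first.
  exists 0; split=> [||k ski Tk]; [by left | by [] |].
  by move: (no_cut (Ordinal (early k Tk))); rewrite /cut /= ski eqxx Tk.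
case: (arg_maxnP val cut_k0) => km /andP[/eqP skm Tkm] km_max.
exists (T km); split=> [||k ski Tk]; [by right; exists km | by [] |].
apply: schedule_mono; apply: (km_max (Ordinal (early k Tk))).
by rewrite /cut /= ski eqxx Tk.
Qed.

Variables (h : P -> R) (M : R).
Hypothesis HM : MH_le h s T M.

Lemma cut_in_window (c tm : R) i : c <= h i -> 0 <= tm -> M < c * tm ->
  exists k, [/\ s k = i, T k <= tm & c * (tm - T k) <= M].
Proof.
move=> c_le tm_ge0 M_lt; have [L cutL] := last_cut_exists i tm_ge0.
have HL := HM tm_ge0 cutL; case: cutL => [[L0|[k [ski TkL]]] L_le _].
  move: HL; rewrite L0 subr0 => /(le_trans (ler_wpM2r tm_ge0 c_le)).
  by rewrite leNgt M_lt.
exists k; rewrite ski TkL; split => //.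
by apply: le_trans HL; rewrite ler_wpM2r // subr_ge0.
Qed.

End Schedule.

Theorem lemma4 (R : realFieldType) (n : nat)
  (h : 'I_n.+1 -> R) (t : 'I_n.+1 -> 'I_n.+1 -> R)
  (h_pos : forall i, 0 < h i)
  (h_noninc : forall i j : 'I_n.+1, (i <= j)%N -> h j <= h i)
  (t_pos : forall i j, i != j -> 0 < t i j)
  (t_sym : forall i j, t i j = t j i)
  (t_tri : forall i j k, i != j -> j != k -> i != k -> t i k <= t i j + t j k)
  (s : nat -> 'I_n.+1) (T : nat -> R)
  (S_sched : schedule t s T)
  (V' : {set 'I_n.+1}) (V'_ne : V' != set0)
  (M : R) (HM : MH_le h s T M) :
  hmin h V' * MST t V' <= M.
Proof.
have [i0 i0V] := set0Pn _ V'_ne.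
set c := hmin h V'; have c_gt0 : 0 < c := hmin_gt0 V' h_pos.
pose tm := `|M| / c + 1.
have tm_ge0 : 0 <= tm by rewrite addr_ge0 // divr_ge0 // ltW.
have M_lt : M < c * tm.
  rewrite mulrDr mulr1 mulrCA divff ?gt_eqF // mulr1; have := ler_norm M; lra.
have /fin_all_exists[f Hf] : forall i, exists k, i \in V' ->
    [/\ s k = i, T k <= tm & c * (tm - T k) <= M].
  move=> i; have [iV|iV] := boolP (i \in V'); last by exists 0%N.
  by have [k Hk] := cut_in_window t_pos S_sched HM (hmin_le h iV) tm_ge0 M_lt; exists k.
case: (arg_minnP f i0V) => ia iaV a_min; case: (arg_maxnP f i0V) => ib ibV b_max.
have [sa _ Ma] := Hf ia iaV; have [_ Tb _] := Hf ib ibV.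
have ab : (f ia <= f ib)%N := a_min ib ibV.
have saV : s (f ia) \in V' by rewrite sa.
have [E [p [tree _ Hw]]] :=
  walk_spanning_tree t_pos t_sym t_tri (schedule_step S_sched) saV (f ib - f ia).
have visited_all : visited s V' (f ia) (f ib - f ia) = V'.
  apply: visited_eq => x xV; have [sx _ _] := Hf x xV.
  by exists (f x); rewrite // subnKC // a_min //=; apply: b_max.
rewrite visited_all subnKC // in tree Hw.
have w_le : weight t E <= tm - T (f ia).
  by have := dist_ge0 t_pos p (s (f ib)); lra.
apply: le_trans Ma; rewrite ler_pM2l //.
by apply: le_trans w_le; apply: MST_le_weight.
Qed.
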